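(* Let $R$ be an associative ring with identity and $M$ a left $R$-module which is projective in $\sigma[M]$. If $M$ has Krull dimension, then $LgSpec(M)$ is weakly scattered.
   Context: Krull dimension of a module is in the sense of Gordon–Robson (the deviation of its lattice of submodules). $\Lambda^{fi}(M)$ is the set of fully invariant submodules of $M$. For $N,L\leq M$, $N_ML=\sum\{f(N)\mid f\in\mathrm{Hom}_R(M,L)\}$. $LgSpec(M)$ is the set of submodules $P\neq M$ such that for all $N,L\in\Lambda^{fi}(M)$, $N_ML\subseteq P$ implies $N\subseteq P$ or $L\subseteq P$, with the topology whose open sets are $\{P\in LgSpec(M)\mid N\nsubseteq P\}$, $N\in\Lambda^{fi}(M)$. A topological space $S$ is weakly scattered if every non-empty closed subset $F$ contains a point $x$ such that there is an open set $U$ with $x\in U\cap F\subseteq\overline{\{x\}}$. *)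

(* Left modules over an (associative, unital, possibly
   non-commutative) ring R are MathComp's [lmodType R] with R : pzRingType;
   submodules are predicates [M -> Prop]; R-linear maps are functions
   satisfying MathComp's [linear] predicate. *)
From HB Require Import structures.
From mathcomp Require Import all_boot all_order all_algebra.
Set Implicit Arguments.
Unset Strict Implicit.
Unset Printing Implicit Defensive.
Import GRing.Theory.
Local Open Scope ring_scope.

Section ModuleDefs.
Variable R : pzRingType.

Definition subm (M : lmodType R) (A B : M -> Prop) : Prop :=
  forall x, A x -> B x.

Definition submodule (M : lmodType R) (N : M -> Prop) : Prop :=
  N 0 /\ (forall x y, N x -> N y -> N (x + y)) /\
  (forall (a : R) x, N x -> N (a *: x)).

Definition is_hom (M K : lmodType R) (f : M -> K) : Prop := linear f.

(* K is M-generated: the canonical map from the direct sum of copies of M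
   indexed by Hom(M,K) onto K is surjective, i.e. each element of K is a
   finite sum of images of homomorphisms M -> K. *)
Definition M_generated (M K : lmodType R) : Prop :=
  forall k : K, exists (n : nat) (f : 'I_n -> M -> K) (m : 'I_n -> M),
    (forall i, is_hom (f i)) /\ k = \sum_(i < n) f i (m i).

(* N belongs to sigma[M]: N is (isomorphic to) a submodule of an
   M-generated module. *)
Definition in_sigma (M N : lmodType R) : Prop :=
  exists (K : lmodType R) (g : N -> K),
    M_generated M K /\ is_hom g /\ injective g.

Definition projective_in_sigma (M : lmodType R) : Prop :=
  forall (N L : lmodType R), in_sigma M N -> in_sigma M L ->
  forall g : N -> L, is_hom g -> (forall y : L, exists x : N, g x = y) ->
  forall f : M -> L, is_hom f ->
  exists h : M -> N, is_hom h /\ (forall x, g (h x) = f x).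

(* Ordinals are represented by the elements of an arbitrary
   well-founded strict order (O, lt).  [devle lt a lo hi] means that the
   interval [lo, hi] of submodules has deviation <= a: in every descending
   chain hi >= x_0 >= x_1 >= ... >= lo of submodules, all but finitely many
   factors [x_{i+1}, x_i] have deviation < a, i.e. are trivial (deviation
   -1) or have deviation <= b for some b < a. *)
Inductive devle (M : lmodType R) (O : Type) (lt : O -> O -> Prop)
  : O -> (M -> Prop) -> (M -> Prop) -> Prop :=
| devle_intro (a : O) (lo hi : M -> Prop) :
    (forall x : nat -> M -> Prop,
       (forall i, submodule (x i) /\ subm lo (x i) /\ subm (x i) hi) ->
       (forall i, subm (x i.+1) (x i)) ->
       exists n0, forall i, (n0 <= i)%N ->
         subm (x i) (x i.+1) \/
         exists b, lt b a /\ devle lt b (x i.+1) (x i)) ->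
    devle lt a lo hi.

Definition has_Krull_dim (M : lmodType R) : Prop :=
  exists (O : Type) (lt : O -> O -> Prop),
    well_founded lt /\
    exists a : O, devle lt a (fun x : M => x = 0) (fun _ => True).

Definition fully_invariant (M : lmodType R) (N : M -> Prop) : Prop :=
  submodule N /\
  forall f : M -> M, is_hom f -> forall x, N x -> N (f x).

(* N_M L = sum of f(N), f in Hom_R(M, L)  (L <= M; homomorphisms M -> L are
   viewed as endomorphisms of M with image in L) *)
Definition prodM (M : lmodType R) (N L : M -> Prop) : M -> Prop :=
  fun x => exists (n : nat) (f : 'I_n -> M -> M) (m : 'I_n -> M),
    (forall i, is_hom (f i) /\ (forall y, L (f i y))) /\
    (forall i, N (m i)) /\ x = \sum_(i < n) f i (m i).

Definition LgSpec (M : lmodType R) (P : M -> Prop) : Prop :=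
  submodule P /\ ~ (forall x, P x) /\
  forall N L : M -> Prop, fully_invariant N -> fully_invariant L ->
    subm (prodM N L) P -> subm N P \/ subm L P.

Definition LgOpen (M : lmodType R) (U : (M -> Prop) -> Prop) : Prop :=
  exists N : M -> Prop, fully_invariant N /\
    forall P, U P <-> (LgSpec P /\ ~ subm N P).

Definition LgClosed (M : lmodType R) (F : (M -> Prop) -> Prop) : Prop :=
  exists U, LgOpen U /\ forall P, F P <-> (LgSpec P /\ ~ U P).

Definition LgClosure1 (M : lmodType R) (P : M -> Prop) : (M -> Prop) -> Prop :=
  fun Q => forall F, LgClosed F -> F P -> F Q.

Definition LgSpec_weakly_scattered (M : lmodType R) : Prop :=
  forall F : (M -> Prop) -> Prop, LgClosed F -> (exists P, F P) ->
    exists P, F P /\ exists U, LgOpen U /\ U P /\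
      (forall Q, U Q -> F Q -> LgClosure1 P Q).

End ModuleDefs.

From mathcomp Require Import all_boot all_order all_algebra.
From Stdlib Require Import Classical ClassicalEpsilon Cantor.

(* Let F = V(N) be a nonempty closed subset of LgSpec(M) and, for a fully
   invariant K, let ker K be the intersection of the points of F not containing
   K.  If some such ker K (with F not contained in V(K)) is prime, it is the
   required point: every point of F outside V(K) contains ker K, hence lies in
   its closure.  Otherwise every ker K splits as A B <= ker K with A, B not
   below ker K, and iterating K_{n+1} = K_n A_n, L_n = K_n B_n gives fully
   invariant L_n none of which lies in every point of F, while every point of
   F contains all L_n but at most one.  The intersections of the points of F
   containing the L_n, n in J, then embed the power set of nat into the
   submodule lattice of M; such a lattice has no deviation, because splitting
   nat into infinitely many infinite sets produces a descending chain in which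
   every factor again contains a copy of the power set of nat. *)

Set Implicit Arguments.
Unset Strict Implicit.
Unset Printing Implicit Defensive.
Import GRing.Theory.
Local Open Scope ring_scope.

Section Homomorphisms.
Variables (R : pzRingType) (M K : lmodType R) (f : M -> K).
Hypothesis f_hom : is_hom f.

Lemma is_homD : {morph f : u v / u + v}.
Proof. by move=> u v; have := f_hom 1 u v; rewrite !scale1r. Qed.

Lemma is_hom0 : f 0 = 0.
Proof. by apply: (@addrI _ (f 0)); rewrite -is_homD !addr0. Qed.

Lemma is_homZ a : {morph f : u / a *: u}.
Proof. by move=> u; have := f_hom a u 0; rewrite !addr0 is_hom0 addr0. Qed.

Lemma is_hom_sum n (F : 'I_n -> M) : f (\sum_(i < n) F i) = \sum_(i < n) f (F i).
Proof. exact: (big_morph f is_homD is_hom0). Qed.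

End Homomorphisms.

Lemma is_hom_comp (R : pzRingType) (M K L : lmodType R) (f : K -> L) (g : M -> K) :
  is_hom f -> is_hom g -> is_hom (f \o g).
Proof. by move=> Hf Hg a u v /=; rewrite Hg Hf. Qed.

Section Submodules.
Variables (R : pzRingType) (M : lmodType R).

Lemma submodule_sum (A : M -> Prop) n (F : 'I_n -> M) :
  submodule A -> (forall i, A (F i)) -> A (\sum_(i < n) F i).
Proof.
move=> [A0 [AD _]] AF; elim/big_ind: _ => //; exact: AD.
Qed.

Definition meetm (S : (M -> Prop) -> Prop) : M -> Prop :=
  fun x => forall q, S q -> q x.

Lemma submodule_meetm (S : (M -> Prop) -> Prop) :
  (forall q, S q -> submodule q) -> submodule (meetm S).
Proof.
move=> Ssub; split; [|split].
- by move=> q /Ssub [].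
- by move=> x y Sx Sy q Sq; case: (Ssub q Sq) => _ [qD _]; apply: qD; [exact: Sx|exact: Sy].
- by move=> a x Sx q Sq; case: (Ssub q Sq) => _ [_ qZ]; apply: qZ; exact: Sx.
Qed.

Section Product.
Variables N L : M -> Prop.
Hypotheses (N_fi : fully_invariant N) (L_fi : fully_invariant L).

Lemma prodM_subl : subm (prodM N L) N.
Proof.
move=> _ [n [f [m [Hf [Nm ->]]]]]; apply: submodule_sum; first exact: N_fi.1.
by move=> i; apply: N_fi.2; [exact: (Hf i).1 | exact: Nm].
Qed.

Lemma prodM_subr : subm (prodM N L) L.
Proof.
move=> _ [n [f [m [Hf [_ ->]]]]]; apply: submodule_sum; first exact: L_fi.1.
by move=> i; exact: (Hf i).2.
Qed.

Lemma submodule_prodM : submodule (prodM N L).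
Proof.
have [[_ [_ NZ]] _] := N_fi.
split; [|split].
- exists 0%N, (fun _ => id), (fun _ => 0).
  by split; [case|split; [case|rewrite big_ord0]].
- move=> _ _ [n1 [f1 [m1 [Hf1 [Nm1 ->]]]]] [n2 [f2 [m2 [Hf2 [Nm2 ->]]]]].
  exists (n1 + n2)%N, (fun i => match split i with inl j => f1 j | inr k => f2 k end),
    (fun i => match split i with inl j => m1 j | inr k => m2 k end).
  split; [|split].
  + by move=> i; case: (split i).
  + by move=> i; case: (split i).
  + rewrite big_split_ord; congr (_ + _); apply: eq_bigr => i _.
    * by rewrite (unsplitK (inl i) : split (lshift n2 i) = inl i).
    * by rewrite (unsplitK (inr i) : split (rshift n1 i) = inr i).
- move=> a _ [n [f [m [Hf [Nm ->]]]]].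
  exists n, f, (fun i => a *: m i); split; [by []|split; first by move=> i; apply: NZ].
  by rewrite scaler_sumr; apply: eq_bigr => i _; rewrite is_homZ //; exact: (Hf i).1.
Qed.

Lemma prodM_fully_invariant : fully_invariant (prodM N L).
Proof.
split; first exact: submodule_prodM.
move=> g Hg _ [n [f [m [Hf [Nm ->]]]]].
rewrite is_hom_sum //; exists n, (fun i => g \o f i), m.
split=> // i; split; first exact: is_hom_comp (Hf i).1.
by move=> y /=; apply: L_fi.2 => //; exact: (Hf i).2.
Qed.

End Product.
End Submodules.

Definition subset_nat (A B : nat -> Prop) : Prop := forall m, A m -> B m.

Definition tail_pairs (i : nat) : nat -> Prop :=
  fun m => exists k j, (i <= k)%N /\ m = to_nat (k, j).

Lemma to_nat_inj : injective to_nat.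
Proof. exact: can_inj cancel_of_to. Qed.

Lemma to_nat_notin_tail n j : ~ tail_pairs n.+1 (to_nat (n, j)).
Proof. by move=> [k [j' [lt_nk /to_nat_inj [eq_nk _]]]]; rewrite eq_nk ltnn in lt_nk. Qed.

Section PowersetEmbedding.
Variables (R : pzRingType) (M : lmodType R).

Definition powerset_embedding (C : (nat -> Prop) -> M -> Prop) : Prop :=
  (forall J, submodule (C J)) /\
  forall J1 J2, subm (C J1) (C J2) <-> subset_nat J1 J2.

Lemma powerset_embedding_shift C (B : nat -> Prop) (g : nat -> nat) :
  powerset_embedding C -> injective g -> (forall j, ~ B (g j)) ->
  powerset_embedding (fun J => C (fun m => B m \/ exists2 j, J j & m = g j)).
Proof.
move=> [Csub Cemb] g_inj gB; split=> // J1 J2; rewrite Cemb; split.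
- move=> sub12 j J1j.
  by have [/gB|[j' J2j' /g_inj ->]] := sub12 _ (or_intror (ex_intro2 _ _ j J1j erefl)).
- by move=> sub12 m [Bm|[j J1j ->]]; [left|right; exists j; first exact: sub12].
Qed.

Lemma powerset_embedding_not_devle (O : Type) (lt : O -> O -> Prop) :
  well_founded lt -> forall a C lo hi, powerset_embedding C ->
  subm lo (C (fun=> False)) -> subm (C (fun=> True)) hi -> ~ devle lt a lo hi.
Proof.
move=> wf a; elim/(well_founded_induction wf): a => a IH C lo hi [Csub Cemb] lo_sub sub_hi Hd.
inversion Hd as [a' lo' hi' Hch]; subst a' lo' hi'.
have Cmono J1 J2 : subset_nat J1 J2 -> subm (C J1) (C J2) := (Cemb J1 J2).2.
(* X i is the image of the columns k >= i of the Cantor pairing; the factor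
   [X i.+1, X i] contains the embedding shifted to column i. *)
pose X i := C (tail_pairs i).
have [n0 Hn0] : exists n0, forall i, (n0 <= i)%N ->
    subm (X i) (X i.+1) \/ exists b, lt b a /\ devle lt b (X i.+1) (X i).
  apply: Hch => i; last by apply: Cmono => m [k [j [/ltnW le_ik ->]]]; exists k, j.
  split; [exact: Csub|split=> x Hx].
  - by apply: Cmono (lo_sub x Hx).
  - by apply: sub_hi; apply: Cmono Hx.
case: (Hn0 n0 (leqnn n0)) => [/Cemb sub_tail|[b [lt_ba Hb]]].
  by apply: (@to_nat_notin_tail n0 0%N); apply: sub_tail; exists n0, 0%N.
apply: (IH b lt_ba _ _ _ _ _ _ Hb).
- apply: (@powerset_embedding_shift _ (tail_pairs n0.+1) (fun j => to_nat (n0, j))) => //.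
  + by move=> j j' /to_nat_inj [].
  + exact: to_nat_notin_tail.
- by apply: Cmono => m Hm; left.
- by apply: Cmono => m [[k [j [/ltnW le_k ->]]]|[j _ ->]]; [exists k, j|exists n0, j].
Qed.

Lemma powerset_embedding_no_Krull_dim C :
  powerset_embedding C -> ~ has_Krull_dim M.
Proof.
move=> HC [O [lt [wf [a Ha]]]]; apply: (powerset_embedding_not_devle wf HC _ _ Ha) => //.
by move=> x ->; exact: (HC.1 _).1.
Qed.

Section IndependentFamily.
Variable F : (M -> Prop) -> Prop.
Hypothesis F_sub : forall q, F q -> submodule q.
Variable L : nat -> M -> Prop.
Hypothesis L_escapes : forall n, exists2 q, F q & ~ subm (L n) q.
Hypothesis L_independent :
  forall q, F q -> forall n m, n <> m -> subm (L n) q \/ subm (L m) q.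

Definition hull (J : nat -> Prop) : M -> Prop :=
  meetm (fun q => F q /\ forall n, J n -> subm (L n) q).

Lemma hull_powerset_embedding : powerset_embedding hull.
Proof.
split=> [J|J1 J2]; first by apply: submodule_meetm => q [/F_sub].
split=> [sub12 n J1n|sub12 x Hx q [Fq HJ]]; last by apply: Hx; split=> // n /sub12 /HJ.
apply: NNPP => J2n; have [q Fq Lnq] := L_escapes n.
have hull2_q : subm (hull J2) q.
  move=> x; apply; split=> // m J2m.
  have neq_nm : n <> m by move=> e; apply: J2n; rewrite e.
  by case: (L_independent Fq neq_nm) => // /Lnq.
have Ln_hull1 : subm (L n) (hull J1) by move=> x Lx q' [_ HJ]; exact: HJ n J1n x Lx.
by apply: Lnq => x /Ln_hull1 /sub12 /hull2_q.
Qed.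

End IndependentFamily.
End PowersetEmbedding.

Section Kernels.
Variables (R : pzRingType) (M : lmodType R).
Variable F : (M -> Prop) -> Prop.
Hypothesis F_LgSpec : forall q, F q -> LgSpec q.

Definition outside (K : M -> Prop) (q : M -> Prop) : Prop := F q /\ ~ subm K q.

Definition kernel (K : M -> Prop) : M -> Prop := meetm (outside K).

Lemma kernel_sub K q : outside K q -> subm (kernel K) q.
Proof. by move=> Kq x; apply. Qed.

Lemma not_sub_kernel K A :
  ~ subm A (kernel K) -> exists2 q, outside K q & ~ subm A q.
Proof.
move=> nsubA; apply: NNPP => nq; apply: nsubA => x Ax q Kq.
by apply: NNPP => nqx; apply: nq; exists q => // /(_ x Ax).
Qed.

Lemma outside_prodM K A q : fully_invariant K -> fully_invariant A ->
  outside (prodM K A) q <-> outside K q /\ ~ subm A q.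
Proof.
move=> K_fi A_fi; split=> [[Fq nKAq]|[[Fq nKq] nAq]].
  split; [split=> // Kq|move=> Aq]; apply: nKAq => x.
  - by move/(prodM_subl K_fi)/Kq.
  - by move/(prodM_subr A_fi)/Aq.
split=> // KAq; have [_ [_ q_prime]] := F_LgSpec Fq.
by case: (q_prime _ _ K_fi A_fi KAq).
Qed.

Definition splits K (AB : (M -> Prop) * (M -> Prop)) : Prop :=
  [/\ fully_invariant AB.1, fully_invariant AB.2,
      subm (prodM AB.1 AB.2) (kernel K),
      ~ subm AB.1 (kernel K) & ~ subm AB.2 (kernel K)].

Lemma kernel_LgSpec_or_splits K : (exists q, outside K q) ->
  LgSpec (kernel K) \/ exists AB, splits K AB.
Proof.
move=> [q0 Kq0]; apply: NNPP => /not_or_and [nLg nsplit]; apply: nLg.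
split; [|split].
- by apply: submodule_meetm => q [/F_LgSpec []].
- by move=> ker_all; have [_ [+ _]] := F_LgSpec Kq0.1; apply=> x; exact: ker_all x q0 Kq0.
- move=> A B A_fi B_fi ABk; apply: NNPP => /not_or_and [nA nB].
  by apply: nsplit; exists (A, B).
Qed.

Section NonPrimeChain.
Variable splitting : (M -> Prop) -> (M -> Prop) * (M -> Prop).
Hypothesis splitting_spec :
  forall K, fully_invariant K -> (exists q, outside K q) -> splits K (splitting K).
Hypothesis F_nonempty : exists q, F q.

Fixpoint chain n : M -> Prop :=
  if n is n'.+1 then prodM (chain n') (splitting (chain n')).1 else fun=> True.

Definition branch n : M -> Prop := prodM (chain n) (splitting (chain n)).2.

Lemma chain_spec n : fully_invariant (chain n) /\ exists q, outside (chain n) q.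
Proof.
elim: n => [|n [K_fi K_out]].
  split; first by split=> //; split.
  have [q Fq] := F_nonempty; exists q; split=> // all_q.
  by have [_ [+ _]] := F_LgSpec Fq; apply=> x; exact: all_q.
have [A_fi _ _ nA _] := splitting_spec K_fi K_out.
split; first exact: prodM_fully_invariant.
have [q Kq nAq] := not_sub_kernel nA.
by exists q; apply/outside_prodM.
Qed.

Lemma outside_chain_antitone n m q :
  (n <= m)%N -> outside (chain m) q -> outside (chain n) q.
Proof.
move/subnK <-; elim: (m - n)%N => [//|k IH] /=.
have [K_fi K_out] := chain_spec (k + n).
have [A_fi _ _ _ _] := splitting_spec K_fi K_out.
by move/(outside_prodM _ K_fi A_fi) => [/IH].
Qed.

Lemma outside_branch n q :
  outside (branch n) q <-> outside (chain n) q /\ ~ subm (splitting (chain n)).2 q.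
Proof.
have [K_fi K_out] := chain_spec n.
have [_ B_fi _ _ _] := splitting_spec K_fi K_out.
exact: outside_prodM.
Qed.

Lemma outside_branch_chain n q : outside (branch n) q -> ~ outside (chain n.+1) q.
Proof.
have [K_fi K_out] := chain_spec n.
have [A_fi B_fi ABk _ _] := splitting_spec K_fi K_out.
move=> /outside_branch [Kq nBq] /(outside_prodM _ K_fi A_fi) [_ nAq].
have [_ [_ q_prime]] := F_LgSpec Kq.1.
by case: (q_prime _ _ A_fi B_fi (fun x ABx => kernel_sub Kq (ABk x ABx))).
Qed.

Lemma branch_escapes n : exists2 q, F q & ~ subm (branch n) q.
Proof.
have [K_fi K_out] := chain_spec n.
have [_ _ _ _ nB] := splitting_spec K_fi K_out.
have [q Kq nBq] := not_sub_kernel nB.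
by have [Fq nLq] := (outside_branch n q).2 (conj Kq nBq); exists q.
Qed.

Lemma branch_independent q : F q -> forall n m, n <> m ->
  subm (branch n) q \/ subm (branch m) q.
Proof.
have key n m : (n < m)%N -> outside (branch n) q -> ~ outside (branch m) q.
  move=> lt_nm /outside_branch_chain nKq /outside_branch [Kq _].
  exact/nKq/(outside_chain_antitone lt_nm).
move=> Fq n m neq_nm; apply: NNPP => /not_or_and [nLn nLm].
have [lt_nm|lt_mn|eq_nm] := ltngtP n m; last exact: neq_nm.
- exact: key lt_nm (conj Fq nLn) (conj Fq nLm).
- exact: key lt_mn (conj Fq nLm) (conj Fq nLn).
Qed.

Lemma chain_no_Krull_dim : ~ has_Krull_dim M.
Proof.
apply: powerset_embedding_no_Krull_dim.
apply: (@hull_powerset_embedding _ _ F _ branch).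
- by move=> q /F_LgSpec [].
- exact: branch_escapes.
- exact: branch_independent.
Qed.

End NonPrimeChain.

Lemma exists_prime_kernel : has_Krull_dim M -> (exists q, F q) ->
  exists K, [/\ fully_invariant K, exists q, outside K q & LgSpec (kernel K)].
Proof.
move=> HK F_nonempty; apply: NNPP => no_prime.
have [splitting splitting_spec] : exists splitting : (M -> Prop) -> (M -> Prop) * (M -> Prop),
    forall K, fully_invariant K -> (exists q, outside K q) -> splits K (splitting K).
  apply: (choice (fun K AB => fully_invariant K -> (exists q, outside K q) -> splits K AB)).
  move=> K; apply: NNPP => nAB; apply: no_prime; exists K.
  case: (classic (fully_invariant K /\ exists q, outside K q)) => [[K_fi K_out]|nK].
    split=> //; case: (kernel_LgSpec_or_splits K_out) => // [[AB sAB]].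
    by case: nAB; exists AB.
  by case: nAB; exists (K, K) => K_fi K_out; case: nK.
exact: chain_no_Krull_dim splitting_spec F_nonempty HK.
Qed.

End Kernels.

Section Topology.
Variables (R : pzRingType) (M : lmodType R).

Lemma LgClosed_zero_locus (F : (M -> Prop) -> Prop) : LgClosed F ->
  exists2 N, fully_invariant N & forall q, F q <-> LgSpec q /\ subm N q.
Proof.
move=> [U [[N [N_fi U_N]] F_U]]; exists N => // q; rewrite F_U U_N.
split=> [[Lq nU]|[Lq Nq]]; split=> //; last by move=> [_]; apply.
by apply: NNPP => nNq; apply: nU.
Qed.

Lemma LgClosure1_sub (P Q : M -> Prop) : LgSpec Q -> subm P Q -> LgClosure1 P Q.
Proof.
move=> LQ PQ F' F'_closed F'P.
have [N _ F'_N] := LgClosed_zero_locus F'_closed.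
by have [_ NP] := (F'_N P).1 F'P; apply/F'_N; split=> // x /NP /PQ.
Qed.

End Topology.

Theorem corollary4p34 (R : pzRingType) (M : lmodType R) :
  projective_in_sigma M -> has_Krull_dim M -> LgSpec_weakly_scattered M.
Proof.
move=> _ HK F F_closed [P0 FP0].
have [N _ F_N] := LgClosed_zero_locus F_closed.
have F_LgSpec q : F q -> LgSpec q by move/F_N => [].
have [K [K_fi [q0 Kq0] ker_LgSpec]] :=
  exists_prime_kernel F_LgSpec HK (ex_intro _ P0 FP0).
exists (kernel F K); split.
  by apply/F_N; split=> // x Nx q [/F_N [_ Nq] _]; exact: Nq.
exists (fun P => LgSpec P /\ ~ subm K P); split; first by exists K.
split.
  by split=> // Kker; apply: Kq0.2 => x /Kker /(kernel_sub Kq0).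
move=> Q [LQ nKQ] FQ; apply: LgClosure1_sub => //.
exact: kernel_sub (conj FQ nKQ).
Qed.
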